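(* Let $\mathcal{L}_1,\mathcal{L}_2$ be objects of $\mathbf{Cal^0_{Sym}}$ and write $1_\circledast:=\Sigma_1\times\Sigma_2$. There is a bijection $$\xi:\Sigma'_\circledast\cup\{1_\circledast\}\to\mathbf{Cal^0_{Sym}}(\mathcal{L}_1,\mathcal{L}_2^{\mathrm{op}})$$ such that for every $x\in\Sigma'_\circledast\cup\{1_\circledast\}$, $$x=\bigcup\{\{p\}\times\Sigma[\xi(x)(p)]\,;\,p\in\Sigma_1\},$$ where $\xi(x)(p)\in\mathcal{L}_2^{\mathrm{op}}$ is regarded as an element of $\mathcal{L}_2$ and $\Sigma[\cdot]$ denotes the set of atoms of $\mathcal{L}_2$ below it.
   Context: For a complete lattice $\mathcal{L}_i$: $\Sigma_i,\Sigma_i'$ are its atoms and coatoms, $\Sigma[a]$ (resp. $\Sigma'[a]$) the atoms below (resp. coatoms above) $a$, $\mathsf{Cl}(\omega)=\{\Sigma[a];a\in\omega\}$, $\mathcal{L}^{\mathrm{op}}$ the dual lattice. For a map $f:\mathcal{L}_1\to\mathcal{L}_2$ between complete lattices, $f^\circ(b):=\bigvee\{a\in\mathcal{L}_1; f(a)\le b\}$. $\mathbf{Cal^0_{Sym}}$: objects are complete atomistic coatomistic lattices with $\Sigma[x]\cup\Sigma[y]\ne\Sigma$ for all coatoms $x,y$ and $\Sigma'[p]\cup\Sigma'[q]\ne\Sigma'$ for all atoms $p,q$; arrows $\mathcal{L}\to\mathcal{M}$ are maps $f$ preserving arbitrary joins, sending atoms to atoms or $0$, and such that $f^\circ$ sends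 coatoms to coatoms or $1$. For $R\subseteq\Sigma_1\times\Sigma_2$, $p=(p_1,p_2)$: $R_1[p]:=\{q_1;(q_1,p_2)\in R\}$, $R_2[p]:=\{q_2;(p_1,q_2)\in R\}$. $\Sigma'_\circledast:=\{R\subsetneqq\Sigma_1\times\Sigma_2\,;\,R_1[p]\in\mathsf{Cl}(\Sigma_1'\cup\{1\}),\ R_2[p]\in\mathsf{Cl}(\Sigma_2'\cup\{1\})\ \forall p\}$; $\mathcal{L}_1\circledast\mathcal{L}_2:=\{\bigcap\omega;\omega\subseteq\Sigma'_\circledast\cup\{\Sigma_1\times\Sigma_2\}\}$ ordered by inclusion. *)

(* Joins are handled
   relationally through [is_lub]; the dual lattice L^op is (T, flip le). *)

Set Implicit Arguments.

Section Order.
Variable T : Type.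
Variable le : T -> T -> Prop.

Definition flip_le : T -> T -> Prop := fun x y => le y x.

Definition is_partial_order : Prop :=
  (forall x, le x x) /\
  (forall x y z, le x y -> le y z -> le x z) /\
  (forall x y, le x y -> le y x -> x = y).

Definition is_lub (S : T -> Prop) (a : T) : Prop :=
  (forall x, S x -> le x a) /\ (forall y, (forall x, S x -> le x y) -> le a y).

Definition is_complete_lattice : Prop :=
  is_partial_order /\ forall S : T -> Prop, exists a, is_lub S a.

Definition is_bot (z : T) : Prop := forall x, le z x.
Definition is_top (z : T) : Prop := forall x, le x z.

Definition is_atom (a : T) : Prop :=
  ~ is_bot a /\ forall b, le b a -> is_bot b \/ b = a.

Definition atoms_below (a : T) : T -> Prop := fun q => is_atom q /\ le q a.

End Order.

Definition is_coatom T (le : T -> T -> Prop) (a : T) := is_atom (flip_le le) a.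
Definition coatoms_above T (le : T -> T -> Prop) (a : T) : T -> Prop :=
  fun c => is_coatom le c /\ le a c.

Definition image T U (f : T -> U) (S : T -> Prop) : U -> Prop :=
  fun y => exists x, S x /\ f x = y.

Definition is_atomistic T (le : T -> T -> Prop) : Prop :=
  forall a, is_lub le (atoms_below le a) a.
Definition is_coatomistic T (le : T -> T -> Prop) : Prop :=
  forall a, is_lub (flip_le le) (coatoms_above le a) a.

Definition cal0sym_obj T (le : T -> T -> Prop) : Prop :=
  is_complete_lattice le /\ is_atomistic le /\ is_coatomistic le /\
  (* Sigma[x] u Sigma[y] <> Sigma for all coatoms x, y *)
  (forall x y, is_coatom le x -> is_coatom le y ->
     exists p, is_atom le p /\ ~ le p x /\ ~ le p y) /\
  (* Sigma'[p] u Sigma'[q] <> Sigma' for all atoms p, q *)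
  (forall p q, is_atom le p -> is_atom le q ->
     exists c, is_coatom le c /\ ~ le p c /\ ~ le q c).

Definition cal0sym_arrow T U (leT : T -> T -> Prop) (leU : U -> U -> Prop)
  (f : T -> U) : Prop :=
  (forall (S : T -> Prop) a, is_lub leT S a -> is_lub leU (image f S) (f a)) /\
  (forall p, is_atom leT p -> is_atom leU (f p) \/ is_bot leU (f p)) /\
  (* f°(b) := \/ {a ; f a <= b} sends coatoms to coatoms or 1 *)
  (forall b, is_coatom leU b ->
     forall c, is_lub leT (fun a => leU (f a) b) c ->
       is_coatom leT c \/ is_top leT c).

Definition HomOp T1 T2 (le1 : T1 -> T1 -> Prop) (le2 : T2 -> T2 -> Prop) : Type :=
  { f : T1 -> T2 | cal0sym_arrow le1 (flip_le le2) f }.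

(* 1_circledast = Sigma1 x Sigma2, as a relation *)
Definition one_star T1 T2 (le1 : T1 -> T1 -> Prop) (le2 : T2 -> T2 -> Prop)
  : T1 -> T2 -> Prop := fun q1 q2 => is_atom le1 q1 /\ is_atom le2 q2.

Definition in_SigmaStar' T1 T2 (le1 : T1 -> T1 -> Prop) (le2 : T2 -> T2 -> Prop)
  (R : T1 -> T2 -> Prop) : Prop :=
  (forall q1 q2, R q1 q2 -> is_atom le1 q1 /\ is_atom le2 q2) /\
  ~ (forall q1 q2, is_atom le1 q1 -> is_atom le2 q2 -> R q1 q2) /\
  (forall p1 p2, is_atom le1 p1 -> is_atom le2 p2 ->
     (* R1[p] in Cl(Sigma1' u {1}) *)
     (exists a, (is_coatom le1 a \/ is_top le1 a) /\
        forall q1, R q1 p2 <-> atoms_below le1 a q1) /\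
     (* R2[p] in Cl(Sigma2' u {1}) *)
     (exists b, (is_coatom le2 b \/ is_top le2 b) /\
        forall q2, R p1 q2 <-> atoms_below le2 b q2)).

Definition SigmaStar1 T1 T2 (le1 : T1 -> T1 -> Prop) (le2 : T2 -> T2 -> Prop) : Type :=
  { R : T1 -> T2 -> Prop | in_SigmaStar' le1 le2 R \/ R = one_star le1 le2 }.

From Stdlib Require Import Classical ClassicalEpsilon FunctionalExtensionality
  PropExtensionality ProofIrrelevance.

(* For a relation R between atoms, call f : L1 -> L2 a representation of R
   when the atoms below f a are exactly the atoms related by R to every atom
   below a.  If every row and column of R is the set of atoms below a coatom
   or 1, as for the elements of Sigma'_* and for 1_*, the meet of the
   elements coding the rows R[p], p <= a, represents R, and the closedness of
   the columns makes it an arrow L1 -> L2^op.  Conversely an arrow h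
   represents the relation q2 <= h q1 on atoms, which is closed in the same
   sense.  In an atomistic L2 a representation is determined by R, and R is
   read off it, which gives the bijection. *)

Section LatticeFacts.
Variables (T : Type) (le : T -> T -> Prop).

Lemma po_refl x : is_partial_order le -> le x x.
Proof. intros [refl _]. apply refl. Qed.

Lemma po_trans x y z : is_partial_order le -> le x y -> le y z -> le x z.
Proof. intros [_ [trans _]]. apply trans. Qed.

Lemma lub_unique S a b :
  is_partial_order le -> is_lub le S a -> is_lub le S b -> a = b.
Proof.
  intros [_ [_ anti]] [Ha1 Ha2] [Hb1 Hb2]. apply anti; auto.
Qed.

Lemma glb_exists :
  is_complete_lattice le -> forall S, exists c, is_lub (flip_le le) S c.
Proof.
  intros [_ CL] S.
  destruct (CL (fun y => forall x, S x -> le y x)) as [c [Hc1 Hc2]].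
  exists c. split.
  - intros x Hx. apply Hc2. intros y Hy. apply Hy, Hx.
  - intros y Hy. apply Hc1. intros x Hx. apply Hy, Hx.
Qed.

Lemma top_exists : is_complete_lattice le -> exists t, is_top le t.
Proof.
  intros [_ CL]. destruct (CL (fun _ => True)) as [t [Ht _]].
  exists t. intro x. apply Ht. exact I.
Qed.

Lemma le_of_atoms_below x y :
  is_atomistic le -> (forall q, atoms_below le x q -> le q y) -> le x y.
Proof. intros At H. apply (At x), H. Qed.

Lemma eq_of_atoms_below x y :
  is_partial_order le -> is_atomistic le ->
  (forall q, is_atom le q -> (le q x <-> le q y)) -> x = y.
Proof.
  intros [_ [_ anti]] At H.
  apply anti; apply le_of_atoms_below; trivial;
    intros q [qa qle]; apply (H q qa); exact qle.
Qed.

Lemma atom_le_atom_eq p q : is_atom le p -> is_atom le q -> le q p -> q = p.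
Proof.
  intros [_ Hp] [Hq _] Hqp. destruct (Hp q Hqp); [contradiction | trivial].
Qed.

Lemma top_of_no_atoms x : is_atomistic le -> ~ (exists q, is_atom le q) -> is_top le x.
Proof.
  intros At N y. apply le_of_atoms_below; trivial.
  intros q [qa _]. exfalso. apply N. exists q. exact qa.
Qed.

End LatticeFacts.

Arguments po_refl {T le} x.
Arguments po_trans {T le} x y z.
Arguments lub_unique {T le S a b}.
Arguments glb_exists {T le}.
Arguments top_exists {T le}.
Arguments le_of_atoms_below {T le x y}.
Arguments eq_of_atoms_below {T le x y}.
Arguments atom_le_atom_eq {T le p q}.
Arguments top_of_no_atoms {T le x}.

Section Representations.
Variables (T1 T2 : Type) (le1 : T1 -> T1 -> Prop) (le2 : T2 -> T2 -> Prop).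
Hypotheses (C1 : is_complete_lattice le1) (C2 : is_complete_lattice le2)
  (At1 : is_atomistic le1) (At2 : is_atomistic le2).

Let PO1 : is_partial_order le1 := proj1 C1.
Let PO2 : is_partial_order le2 := proj1 C2.

(* The conditions on Sigma'_* without properness, which also hold for 1_*. *)
Definition is_closed_relation (R : T1 -> T2 -> Prop) : Prop :=
  (forall q1 q2, R q1 q2 -> is_atom le1 q1 /\ is_atom le2 q2) /\
  (forall p1 p2, is_atom le1 p1 -> is_atom le2 p2 ->
     (exists a, (is_coatom le1 a \/ is_top le1 a) /\
        forall q1, R q1 p2 <-> atoms_below le1 a q1) /\
     (exists b, (is_coatom le2 b \/ is_top le2 b) /\
        forall q2, R p1 q2 <-> atoms_below le2 b q2)).

Lemma SigmaStar1_closed (x : SigmaStar1 le1 le2) : is_closed_relation (proj1_sig x).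
Proof.
  destruct x as [R HR]; simpl. destruct HR as [[Hsub [_ Hrc]] | HR].
  - split; assumption.
  - subst R. destruct (top_exists C1) as [t1 Ht1], (top_exists C2) as [t2 Ht2].
    split; [intros q1 q2 H; exact H |].
    intros p1 p2 hp1 hp2. split.
    + exists t1. split; [right; exact Ht1 |].
      intro q1. split; intros [h _]; split; trivial; apply Ht1.
    + exists t2. split; [right; exact Ht2 |].
      intro q2. split; [intros [_ h] | intros [h _]]; split; trivial; apply Ht2.
Qed.

Definition represents (R : T1 -> T2 -> Prop) (f : T1 -> T2) : Prop :=
  forall a r, is_atom le2 r ->
    (le2 r (f a) <-> forall p, is_atom le1 p -> le1 p a -> R p r).

Lemma represents_unique R f g : represents R f -> represents R g -> f = g.
Proof.
  intros Hf Hg. apply functional_extensionality. intro a.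
  apply (eq_of_atoms_below PO2 At2). intros q qa.
  rewrite (Hf a q qa), (Hg a q qa). reflexivity.
Qed.

Lemma relation_of_represents R f q1 q2 :
  is_closed_relation R -> represents R f ->
  (R q1 q2 <-> is_atom le1 q1 /\ atoms_below le2 (f q1) q2).
Proof.
  intros [Hsub _] Hf. split.
  - intros H. destruct (Hsub _ _ H) as [h1 h2].
    split; [exact h1 | split; [exact h2 |]]. apply Hf; trivial.
    intros p hp hpq. rewrite (atom_le_atom_eq h1 hp hpq). exact H.
  - intros [h1 [h2 Hle]]. exact (proj1 (Hf q1 q2 h2) Hle q1 h1 (po_refl q1 PO1)).
Qed.

Definition row_bounds (R : T1 -> T2 -> Prop) (a : T1) : T2 -> Prop :=
  fun b => exists p, is_atom le1 p /\ le1 p a /\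
    (forall q2, R p q2 <-> atoms_below le2 b q2).

Definition rel_map (R : T1 -> T2 -> Prop) (a : T1) : T2 :=
  proj1_sig (constructive_indefinite_description _ (glb_exists C2 (row_bounds R a))).

Lemma rel_map_glb R a : is_lub (flip_le le2) (row_bounds R a) (rel_map R a).
Proof. exact (proj2_sig (constructive_indefinite_description _ _)). Qed.

Lemma rel_map_represents R : is_closed_relation R -> represents R (rel_map R).
Proof.
  intros [_ Hrc] a r hr. destruct (rel_map_glb R a) as [Hlow Hgreat]. split.
  - intros Hr p hp hpa.
    destruct (Hrc p r hp hr) as [_ [b [_ Hb]]].
    apply Hb. split; trivial. apply (po_trans _ (rel_map R a) _ PO2); trivial.
    apply Hlow. exists p. auto.
  - intros H. apply Hgreat. intros b [p [hp [hpa Hb]]].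
    apply Hb. apply H; trivial.
Qed.

Section ArrowOfRepresentation.
Variables (R : T1 -> T2 -> Prop) (f : T1 -> T2).
Hypotheses (HR : is_closed_relation R) (Hf : represents R f).

Lemma represents_join (S : T1 -> Prop) a :
  is_lub le1 S a -> is_lub (flip_le le2) (image f S) (f a).
Proof.
  intros [Hup Hleast]. split.
  - intros y [s [Hs <-]]. apply (le_of_atoms_below At2).
    intros q [qa qle]. apply Hf; trivial. intros p hp hps.
    apply (proj1 (Hf a q qa) qle p hp). apply (po_trans _ s _ PO1); auto.
  - intros y Hy. apply (le_of_atoms_below At2).
    intros q [qa qy]. apply Hf; trivial. intros p hp hpa.
    assert (Hs : forall s, S s -> le2 q (f s)).
    { intros s Hs. apply (po_trans _ y _ PO2); trivial. apply Hy. exists s. auto. }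
    destruct (proj2 HR p q hp qa) as [[c [_ Hc]] _].
    (* every s in S lies below the element c whose atoms form the column R[q] *)
    assert (Hac : le1 a c).
    { apply Hleast. intros s Hsin. apply (le_of_atoms_below At1).
      intros q1 [q1a q1s]. apply Hc. exact (proj1 (Hf s q qa) (Hs s Hsin) q1 q1a q1s). }
    apply Hc. split; trivial. apply (po_trans _ a _ PO1); trivial.
Qed.

Lemma represents_atom p :
  is_atom le1 p -> is_atom (flip_le le2) (f p) \/ is_bot (flip_le le2) (f p).
Proof.
  intro hp. destruct (classic (exists r, is_atom le2 r)) as [[r hr] | N].
  - destruct (proj2 HR p r hp hr) as [_ [b [Hbt Hb]]].
    replace (f p) with b; [exact Hbt |].
    apply (eq_of_atoms_below PO2 At2). intros q qa. rewrite (Hf p q qa). split.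
    + intros Hq p' hp' hp'p. rewrite (atom_le_atom_eq hp hp' hp'p). apply Hb. split; trivial.
    + intros H. apply Hb, H; [exact hp | exact (po_refl _ PO1)].
  - right. apply top_of_no_atoms; assumption.
Qed.

Lemma represents_residual b :
  is_coatom (flip_le le2) b ->
  forall c, is_lub le1 (fun a => flip_le le2 (f a) b) c -> is_coatom le1 c \/ is_top le1 c.
Proof.
  intros hb c Hc. destruct (classic (exists p, is_atom le1 p)) as [[p hp] | N].
  - destruct (proj2 HR p b hp hb) as [[a' [Ha't Ha']] _].
    replace c with a'; [exact Ha't |].
    refine (lub_unique PO1 _ Hc). split.
    + intros a Ha. apply (le_of_atoms_below At1). intros q [qa qle].
      apply Ha'. exact (proj1 (Hf a b hb) Ha q qa qle).
    + intros y Hy. apply Hy. apply Hf; trivial. intros q hq hqa'.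
      apply Ha'. split; trivial.
  - right. apply top_of_no_atoms; assumption.
Qed.

Lemma represents_arrow : cal0sym_arrow le1 (flip_le le2) f.
Proof.
  split; [exact represents_join | split; [exact represents_atom | exact represents_residual]].
Qed.

End ArrowOfRepresentation.

Section RelationOfArrow.
Variable h : T1 -> T2.
Hypothesis Hh : cal0sym_arrow le1 (flip_le le2) h.

Definition arrow_relation (q1 : T1) (q2 : T2) : Prop :=
  is_atom le1 q1 /\ atoms_below le2 (h q1) q2.

Lemma arrow_antitone x y : le1 x y -> le2 (h y) (h x).
Proof.
  intro Hxy.
  assert (Hl : is_lub le1 (fun z => z = x \/ z = y) y).
  { split.
    - intros z [-> | ->]; [exact Hxy | exact (po_refl _ PO1)].
    - intros z Hz. apply Hz. right. reflexivity. }
  apply (proj1 (proj1 Hh _ _ Hl)). exists x. auto.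
Qed.

Lemma arrow_represents : represents arrow_relation h.
Proof.
  intros a r hr. split.
  - intros Hr p hp hpa. split; [exact hp | split; [exact hr |]].
    apply (po_trans _ (h a) _ PO2); trivial. apply arrow_antitone, hpa.
  - intros H. destruct (proj1 Hh _ _ (At1 a)) as [_ Hgreat].
    apply Hgreat. intros y [p [[hp hpa] <-]]. apply H; trivial.
Qed.

Lemma arrow_relation_column p2 :
  is_atom le2 p2 ->
  exists a, (is_coatom le1 a \/ is_top le1 a) /\
    forall q1, arrow_relation q1 p2 <-> atoms_below le1 a q1.
Proof.
  intro hp2. destruct (proj2 C1 (fun a => le2 p2 (h a))) as [c Hc].
  exists c. split; [exact (proj2 (proj2 Hh) p2 hp2 c Hc) |].
  intro q1. split.
  - intros [q1a [_ q2le]]. split; trivial. apply Hc, q2le.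
  - intros [q1a q1c]. split; [exact q1a | split; [exact hp2 |]].
    apply (po_trans _ (h c) _ PO2); [| apply arrow_antitone, q1c].
    apply (proj2 (proj1 Hh _ _ Hc)). intros x [a [Ha <-]]. exact Ha.
Qed.

Lemma arrow_relation_SigmaStar1 :
  in_SigmaStar' le1 le2 arrow_relation \/ arrow_relation = one_star le1 le2.
Proof.
  destruct (classic (forall q1 q2, is_atom le1 q1 -> is_atom le2 q2 -> arrow_relation q1 q2))
    as [Hall | Hproper].
  - right. apply functional_extensionality. intro q1.
    apply functional_extensionality. intro q2.
    apply propositional_extensionality. split.
    + intros [h1 [h2 _]]. split; trivial.
    + intros [h1 h2]. auto.
  - left. split; [| split; [exact Hproper |]].
    + intros q1 q2 [h1 [h2 _]]. split; trivial.
    + intros p1 p2 hp1 hp2. split; [exact (arrow_relation_column p2 hp2) |].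
      exists (h p1). split; [exact (proj1 (proj2 Hh) p1 hp1) |].
      intro q2. unfold arrow_relation. tauto.
Qed.

End RelationOfArrow.

End Representations.

Arguments is_closed_relation {T1 T2} le1 le2 R.
Arguments represents {T1 T2} le1 le2 R f.
Arguments arrow_relation {T1 T2} le1 le2 h q1 q2.
Arguments SigmaStar1_closed {T1 T2 le1 le2}.
Arguments rel_map {T1 T2} le1 {le2}.
Arguments rel_map_represents {T1 T2 le1 le2} C2 {R}.
Arguments represents_arrow {T1 T2 le1 le2} C1 C2 At1 At2 {R f}.
Arguments relation_of_represents {T1 T2 le1 le2} C1 {R f}.
Arguments represents_unique {T1 T2 le1 le2} C2 At2 {R f g}.
Arguments arrow_relation_SigmaStar1 {T1 T2 le1 le2} C1 C2 {h}.
Arguments arrow_represents {T1 T2 le1 le2} C1 C2 At1 {h}.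

Theorem lemma4p4 (T1 T2 : Type) (le1 : T1 -> T1 -> Prop) (le2 : T2 -> T2 -> Prop)
  (H1 : cal0sym_obj le1) (H2 : cal0sym_obj le2) :
  exists xi : SigmaStar1 le1 le2 -> HomOp le1 le2,
    (forall x y, xi x = xi y -> x = y) /\
    (forall h, exists x, xi x = h) /\
    (forall x q1 q2,
       proj1_sig x q1 q2 <->
       (is_atom le1 q1 /\ atoms_below le2 (proj1_sig (xi x) q1) q2)).
Proof.
  destruct H1 as [C1 [At1 _]], H2 as [C2 [At2 _]].
  pose (closed := SigmaStar1_closed C1 C2).
  pose (repr x := rel_map_represents C2 (closed x)).
  pose (xi (x : SigmaStar1 le1 le2) := exist _ (rel_map le1 C2 (proj1_sig x))
          (represents_arrow C1 C2 At1 At2 (closed x) (repr x)) : HomOp le1 le2).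
  assert (Hrel : forall x q1 q2, proj1_sig x q1 q2 <->
            is_atom le1 q1 /\ atoms_below le2 (proj1_sig (xi x) q1) q2)
    by (intros x q1 q2; exact (relation_of_represents C1 q1 q2 (closed x) (repr x))).
  exists xi. split; [| split; [| exact Hrel]].
  - intros x y Exy. apply eq_sig_hprop; [intros; apply proof_irrelevance |].
    apply functional_extensionality. intro q1.
    apply functional_extensionality. intro q2.
    apply propositional_extensionality. rewrite Hrel, Hrel, Exy. reflexivity.
  - intros [h Hh].
    pose (x := exist _ (arrow_relation le1 le2 h) (arrow_relation_SigmaStar1 C1 C2 Hh)
           : SigmaStar1 le1 le2).
    exists x. apply eq_sig_hprop; [intros; apply proof_irrelevance |].
    exact (represents_unique C2 At2 (repr x) (arrow_represents C1 C2 At1 Hh)).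
Qed.
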